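(* Let $(M,S)$ be a covered map with $\Delta(M,S)=(M,(I,O))$. Then $\Delta(M^*,\bar S)=(M^*,(O,I))$, where $\bar S=H\setminus S$; that is, the oriented map associated with the dual covered map is the dual oriented map.
   Context: Permutations compose right to left. A map is $M=(H,\sigma,\alpha)$ with $H$ finite, $\alpha$ a fixed-point-free involution, $\sigma$ a permutation, $\langle\sigma,\alpha\rangle$ transitive, root $r\in H$; $\phi=\sigma\alpha$. The dual map is $M^*=(H,\phi,\alpha)$ with the same root. For $S\subseteq H$, $\pi_{|S}$ is obtained from the cycles of $\pi$ by erasing elements not in $S$. A covered map is $(M,S)$ with $S$ stable by $\alpha$ and $(S,\sigma_{|S},\alpha_{|S})$ a connecting unicellular map ($\sigma_{|S},\alpha_{|S}$ transitive on $S$, $S$ meets every cycle of $\sigma$ — $S=\emptyset$ allowed if $\sigma$ has one cycle — and $\sigma_{|S}\alpha_{|S}$ cyclic); its dual is $(M^*,\bar S)$, which is again a covered map. For a covered map $(M,S)$ the motion function $\theta(h)=\sigma\alpha(h)$ ($h\in S$), $\theta(h)=\sigma(h)$ ($h\notin S$) is cyclic, and the appearance order is $r\prec_S\theta(r)\prec_S\cdots\prec_S\theta^{|H|-1}(r)$. $\Delta(M,S)=(M,(I,O))$ with $I=\{h\in S:\alpha(h)\prec_S h\}\cup\{h\notin S:h\prec_S\alpha(h)\}$, $O=H\setminus I$ (computed for $(M^*,\bar S)$ with the motion function and appearance order of $(M^*,\bar S)$). *)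

From mathcomp Require Import all_boot all_fingroup.
Set Implicit Arguments. Unset Strict Implicit. Unset Printing Implicit Defensive.

Section Maps.
Variable H : finType.
Local Open Scope group_scope.

(* Permutations compose right to left: [pcomp s t] is s o t, i.e. h |-> s (t h).
   (MathComp's group product (t * s) acts left to right.) *)
Definition pcomp (s t : {perm H}) : {perm H} := (t * s)%g.

Definition phi (sigma alpha : {perm H}) : {perm H} := pcomp sigma alpha.

Definition is_map (sigma alpha : {perm H}) : Prop :=
  (forall h, alpha (alpha h) = h /\ alpha h != h) /\
  (forall x y, connect [rel u v | (v == sigma u) || (v == alpha u)] x y).

(* pi_{|S}: on h in S, the first element pi^k h (k >= 1) lying in S
   (i.e. the cycles of pi with the elements outside S erased).
   Its values outside S are irrelevant. *)
Definition restr (pi : {perm H}) (S : {set H}) (h : H) : H :=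
  let t := traject pi (pi h) #|H| in
  nth h t (find (fun y => y \in S) t).

Definition connecting_unicellular (sigma alpha : {perm H}) (S : {set H}) : Prop :=
  let sS := restr sigma S in
  let aS := restr alpha S in
  (forall x y, x \in S -> y \in S ->
     connect [rel u v | (u \in S) && ((v == sS u) || (v == aS u))] x y) /\
  ((forall h, exists2 h', h' \in S & fconnect sigma h h') \/
   (S = set0 /\ forall x y, fconnect sigma x y)) /\
  (forall x y, x \in S -> y \in S -> fconnect (fun u => sS (aS u)) x y).

Definition covered_map (sigma alpha : {perm H}) (S : {set H}) : Prop :=
  is_map sigma alpha /\
  (forall h, (alpha h \in S) = (h \in S)) /\
  connecting_unicellular sigma alpha S.

Definition motion (sigma alpha : {perm H}) (S : {set H}) (h : H) : H :=
  if h \in S then sigma (alpha h) else sigma h.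

Definition appear_prec (sigma alpha : {perm H}) (S : {set H}) (r h h' : H) : bool :=
  findex (motion sigma alpha S) r h < findex (motion sigma alpha S) r h'.

(* Delta(M,S) = (M,(I,O)); we return the pair (I,O). *)
Definition Delta (sigma alpha : {perm H}) (r : H) (S : {set H})
  : {set H} * {set H} :=
  let I := [set h | if h \in S then appear_prec sigma alpha S r (alpha h) h
                    else appear_prec sigma alpha S r h (alpha h)] in
  (I, ~: I).

End Maps.

(* The motion function of the dual covered map (phi, alpha, ~S) coincides with
   that of (sigma, alpha, S): on ~S it sends h to phi (alpha h) = sigma h, and on
   S it sends h to phi h = sigma (alpha h).  Hence both covered maps have the
   same appearance order.  Since the motion function is cyclic, this order is
   total, so for every half-edge h, which differs from alpha h, exactly one of
   h and alpha h comes first; complementing S therefore swaps I and O. *)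

From mathcomp Require Import all_boot all_fingroup.
From Stdlib Require Import FunctionalExtensionality.

Set Implicit Arguments. Unset Strict Implicit. Unset Printing Implicit Defensive.

Section Restriction.
Variable H : finType.
Implicit Types (pi : {perm H}) (S : {set H}).

Lemma restr_first pi S h : h \in S ->
  exists j, [/\ restr pi S h = iter j pi (pi h), restr pi S h \in S &
                forall i, i < j -> iter i pi (pi h) \notin S].
Proof.
move=> hS; rewrite /restr; set t := traject pi (pi h) #|H|.
have ordS : (fingraph.order pi h).-1.+1 = fingraph.order pi h.
  by rewrite prednK // order_gt0.
have lt_ord : (fingraph.order pi h).-1 < #|H|.
  by rewrite -ltnS ordS ltnS max_card.
have nth_t i : i < #|H| -> nth h t i = iter i pi (pi h).
  by move=> lti; rewrite /t (set_nth_default (pi h)) ?size_traject ?nth_traject.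
have has_t : has (mem S) t.
  apply/hasP; exists h => //.
  have -> : h = nth h t (fingraph.order pi h).-1.
    by rewrite nth_t // -iterSr ordS iter_order //; apply: perm_inj.
  by rewrite mem_nth // size_traject.
have find_lt : find (mem S) t < #|H| by move: has_t; rewrite has_find size_traject.
exists (find (mem S) t); split; first exact: nth_t.
  exact: (nth_find h has_t).
move=> i lti; rewrite -nth_t ?(ltn_trans lti) //.
by have := before_find h lti; rewrite /= => ->.
Qed.

Lemma restr_step pi S h : pi h \in S -> restr pi S h = pi h.
Proof.
move=> phS; have : 0 < #|H| by apply/card_gt0P; exists h.
by rewrite /restr; case: #|H| => //= n _; rewrite phS.
Qed.

End Restriction.

Section Motion.
Variables (H : finType) (sigma alpha : {perm H}) (S : {set H}).
Local Notation theta := (motion sigma alpha S).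
Hypothesis alpha_stable : forall h, (alpha h \in S) = (h \in S).

Lemma motion_inj : injective theta.
Proof.
move=> x y; rewrite /motion.
case xS: (x \in S); case yS: (y \in S) => /perm_inj // e.
- exact: perm_inj e.
- by move: yS; rewrite -e alpha_stable xS.
- by move: xS; rewrite e alpha_stable yS.
Qed.

Lemma iter_motion_outside j x : (forall i, i < j -> iter i sigma x \notin S) ->
  iter j theta x = iter j sigma x.
Proof.
elim: j => [//|j IHj] outS; rewrite !iterS IHj => [|i lt_ij]; last first.
  by apply: outS; apply: ltnW.
by rewrite /motion (negbTE (outS j (ltnSn j))).
Qed.

Lemma motion_reaches_S n h : iter n sigma h \in S ->
  exists2 s, s \in S & fconnect theta h s.
Proof.
elim: n h => [|n IHn] h; first by exists h; rewrite ?connect0.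
case hS: (h \in S); first by exists h; rewrite ?connect0.
rewrite iterSr => /IHn [s sS h_s]; exists s => //.
have theta_h : theta h = sigma h by rewrite /motion hS.
by rewrite -theta_h in h_s; apply: connect_trans h_s; apply: fconnect1.
Qed.

Lemma motion_connect_restr u : u \in S ->
  restr sigma S (restr alpha S u) \in S /\
  fconnect theta u (restr sigma S (restr alpha S u)).
Proof.
move=> uS; have auS : alpha u \in S by rewrite alpha_stable.
rewrite [restr alpha S u]restr_step //.
have [k [-> inS outS]] := restr_first sigma auS.
split=> //; apply: connect_trans (fconnect1 theta u) _.
rewrite {2}/motion uS -iter_motion_outside //; exact: fconnect_iter.
Qed.

Lemma motion_connect_in_S s s' : s \in S ->
  fconnect (fun u => restr sigma S (restr alpha S u)) s s' -> fconnect theta s s'.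
Proof.
move=> sS /iter_findex <-; set g := fun u => _.
suff: forall n, iter n g s \in S /\ fconnect theta s (iter n g s).
  by move=> /(_ (findex g s s')) [].
elim=> [|n [inS s_n]]; first by rewrite connect0.
rewrite iterS; have [inS' n_Sn] := motion_connect_restr inS.
by split; last apply: connect_trans s_n n_Sn.
Qed.

End Motion.

(* Off S, theta follows sigma, so every half-edge reaches S; between two visits
   to S, theta follows sigma_S alpha_S, whose single cycle then puts S, and
   hence all of H, on one theta-orbit. *)
Lemma motion_cyclic (H : finType) (sigma alpha : {perm H}) (S : {set H}) r h :
  covered_map sigma alpha S -> fconnect (motion sigma alpha S) r h.
Proof.
case=> _ [stab [_ [cover unicellular]]].
case: cover => [cover | [-> one_cycle]]; last first.
  by rewrite (@eq_fconnect _ _ sigma) // => x; rewrite /motion inE.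
have toS x : exists2 s, s \in S & fconnect (motion sigma alpha S) x s.
  have [h' h'S /iter_findex e] := cover x.
  by apply: (@motion_reaches_S _ sigma alpha S (findex sigma x h')); rewrite e.
have [sr srS r_sr] := toS r; have [sh shS h_sh] := toS h.
have sr_sh := motion_connect_in_S stab srS (unicellular _ _ srS shS).
apply: connect_trans r_sr (connect_trans sr_sh _).
by rewrite fconnect_sym //; apply: motion_inj.
Qed.

Lemma motion_dual (H : finType) (sigma alpha : {perm H}) (S : {set H}) :
  involutive alpha ->
  motion (phi sigma alpha) alpha (~: S) = motion sigma alpha S.
Proof.
move=> alphaK; apply: functional_extensionality => h.
by rewrite /motion /phi /pcomp inE !permM; case: (h \in S); rewrite //= alphaK.
Qed.

Lemma findex_lt_total (T : finType) (f : T -> T) r x y :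
  fconnect f r x -> fconnect f r y -> x != y ->
  (findex f r x < findex f r y) = ~~ (findex f r y < findex f r x).
Proof.
move=> /iter_findex rx /iter_findex ry x_neq_y.
by case: ltngtP => // e; rewrite -rx -ry e eqxx in x_neq_y.
Qed.

Theorem mainTheorem12 (H : finType) (sigma alpha : {perm H}) (r : H)
  (S : {set H}) :
  covered_map sigma alpha S ->
  Delta (phi sigma alpha) alpha r (~: S) =
    ((Delta sigma alpha r S).2, (Delta sigma alpha r S).1).
Proof.
move=> cm; have [[alpha_inv _] _] := cm.
have alphaK : involutive alpha by move=> h; case: (alpha_inv h).
have prec_total h : appear_prec sigma alpha S r h (alpha h) =
                    ~~ appear_prec sigma alpha S r (alpha h) h.
  apply: findex_lt_total; rewrite ?(motion_cyclic _ _ cm) // eq_sym.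
  by case: (alpha_inv h).
have same_order : appear_prec (phi sigma alpha) alpha (~: S) = appear_prec sigma alpha S.
  by rewrite /appear_prec motion_dual.
rewrite /Delta same_order /=.
congr pair; apply/setP => h; rewrite !inE;
by case: (h \in S); rewrite /= prec_total ?negbK.
Qed.
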